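(* Let $\mathfrak{s}$ be a finite-dimensional real Lie algebra and let $J$ be an abelian complex structure on $\mathfrak{s}$. Then there exists an increasing sequence $\{0\}=\mathfrak{s}_0\subset\mathfrak{s}_1\subset\cdots\subset\mathfrak{s}_{r-1}\subset\mathfrak{s}_r=\mathfrak{s}$ of $J$-stable ideals of $\mathfrak{s}$ such that, for each $1\le j\le r$, the quotient $\mathfrak{s}_j/\mathfrak{s}_{j-1}$ (with the complex structure induced by $J$) is holomorphically isomorphic to a central extension of $\mathfrak{aff}(A_j)$, equipped with the abelian complex structure $J(a,b)=(b,-a)$, for some finite-dimensional real commutative associative algebra $A_j$. Here ''central extension of $\mathfrak{aff}(A_j)$'' means a Lie algebra $\mathfrak{h}$ with abelian complex structure $J_{\mathfrak h}$ whose center $\mathfrak{z}(\mathfrak h)$ is $J_{\mathfrak h}$-stable and such that $\mathfrak h/\mathfrak z(\mathfrak h)$ with the induced structure is holomorphically isomorphic to $\mathfrak{aff}(A_j)$.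
   Context: A complex structure on a real Lie algebra $\mathfrak g$ is a linear map $J:\mathfrak g\to\mathfrak g$ with $J^2=-\mathrm{Id}$ and $J[x,y]-[Jx,y]-[x,Jy]-J[Jx,Jy]=0$ for all $x,y\in\mathfrak g$. An abelian complex structure is a linear map $J$ with $J^2=-\mathrm{Id}$ and $[Jx,Jy]=[x,y]$ for all $x,y$ (such $J$ is automatically a complex structure). For a finite-dimensional real associative algebra $A$, $\mathfrak{aff}(A)$ is the Lie algebra $A\oplus A$ with bracket $[(a,b),(a',b')]=(aa'-a'a,\ ab'-a'b)$; when $A$ is commutative this is $[(a,b),(a',b')]=(0,ab'-a'b)$, and $J(a,b)=(b,-a)$ is an abelian complex structure on it. A holomorphic isomorphism between Lie algebras with complex structures $(\mathfrak g_1,J_1)$, $(\mathfrak g_2,J_2)$ is a Lie algebra isomorphism $f$ with $f\circ J_1=J_2\circ f$. A $J$-stable ideal $I$ gives an induced endomorphism on $\mathfrak s/I$. *)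

From HB Require Import structures.
From mathcomp Require Import all_boot all_order all_algebra.
From mathcomp Require Import reals.
Set Implicit Arguments. Unset Strict Implicit. Unset Printing Implicit Defensive.
Import GRing.Theory.
Local Open Scope ring_scope.

Section LieDefs.
Variable K : fieldType.

Definition lin (U W : vectType K) (f : U -> W) : Prop :=
  forall (a : K) (x y : U), f (a *: x + y) = a *: f x + f y.

Definition is_Lie_bracket (V : vectType K) (br : V -> V -> V) : Prop :=
  [/\ (forall x, lin (br x)),
      (forall y, lin (fun x => br x y)),
      (forall x, br x x = 0) &
      (forall x y z, br x (br y z) + br y (br z x) + br z (br x y) = 0)].

Definition abelian_cs (V : vectType K) (br : V -> V -> V) (J : V -> V) : Prop :=
  [/\ lin J, (forall x, J (J x) = - x) & (forall x y, br (J x) (J y) = br x y)].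

Definition lie_ideal (V : vectType K) (br : V -> V -> V) (I : {vspace V}) : Prop :=
  forall x y, y \in I -> br x y \in I.

Definition J_stable (V : vectType K) (J : V -> V) (I : {vspace V}) : Prop :=
  forall x, x \in I -> J x \in I.

Definition in_center (V : vectType K) (br : V -> V -> V) (x : V) : Prop :=
  forall y, br x y = 0.

Definition comm_assoc_alg (A : vectType K) (m : A -> A -> A) : Prop :=
  [/\ (forall a, lin (m a)), (forall b, lin (fun a => m a b)),
      (forall a b, m a b = m b a) &
      (forall a b c, m a (m b c) = m (m a b) c)].

(* aff(A) = A (+) A, with bracket [(a,b),(a',b')] = (0, ab' - a'b) (A commutative) *)
Definition aff_bracket (A : vectType K) (m : A -> A -> A) (p q : (A * A)%type)
  : (A * A)%type := (0, m p.1 q.2 - m q.1 p.2).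

Definition aff_J (A : vectType K) (p : (A * A)%type) : (A * A)%type := (p.2, - p.1).

(* The isomorphism h/z(h) ~ aff(A) is encoded (first isomorphism theorem) as a
   surjective linear map g : h -> A*A with kernel exactly z(h), which is a Lie
   algebra morphism and intertwines Jh with aff_J. *)
Definition central_ext_of_aff (h : vectType K) (brh : h -> h -> h) (Jh : h -> h)
  (A : vectType K) (m : A -> A -> A) : Prop :=
  [/\ is_Lie_bracket brh, abelian_cs brh Jh,
      (forall x, in_center brh x -> in_center brh (Jh x)) &
      exists g : h -> (A * A)%type,
        [/\ lin g,
            (forall p, exists x, g x = p),
            (forall x, g x = 0 <-> in_center brh x),
            (forall x y, g (brh x y) = aff_bracket m (g x) (g y)) &
            (forall x, g (Jh x) = aff_J (g x))]].

(* Ihi / Ilo (with the structure induced by br, J) is holomorphically isomorphic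
   to (h, brh, Jh): encoded as a linear map f : V -> h whose restriction to Ihi
   is onto h, has kernel exactly Ilo, preserves brackets and intertwines J, Jh. *)
Definition quotient_holo_iso (V : vectType K) (br : V -> V -> V) (J : V -> V)
  (Ilo Ihi : {vspace V}) (h : vectType K) (brh : h -> h -> h) (Jh : h -> h) : Prop :=
  exists f : V -> h,
    [/\ lin f,
        (forall y, exists2 x, x \in Ihi & f x = y),
        (forall x, x \in Ihi -> (f x = 0 <-> x \in Ilo)),
        (forall x y, x \in Ihi -> y \in Ihi -> f (br x y) = brh (f x) (f y)) &
        (forall x, x \in Ihi -> f (J x) = Jh (f x))].

End LieDefs.

(* An abelian complex structure makes the (1,0)- and (0,1)-parts of the
   complexification abelian subalgebras spanning it, so by Ito's theorem s is
   metabelian: its derived algebra D is abelian.  The filtration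
   0 <= N <= s with N = D + J D then works.  The quotient s / N is abelian,
   i.e. a central extension of aff(0).  For N, let Z be its centre and C a
   complement of D :&: Z in D; then N / Z = C (+) J C, and the bracket
   [c1 + J c1', c2 + J c2'] = [J c1', c2] - [J c2', c1] is the bracket of
   aff(C) for the product a * b = [J a, b] mod Z.  This product is commutative
   because [J a, b] = [J b, a], and associative by the Jacobi identity since
   [J a, J b] = [a, b] = 0. *)

From HB Require Import structures.
From mathcomp Require Import all_boot all_order all_algebra.
From mathcomp Require Import reals zify.
From Stdlib Require Import Classical ClassicalEpsilon.
Set Implicit Arguments. Unset Strict Implicit. Unset Printing Implicit Defensive.
Import GRing.Theory.
Local Open Scope ring_scope.

Section AdditiveMaps.
Variables (M N : zmodType) (g : M -> N).
Hypothesis gD : forall x y, g (x + y) = g x + g y.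

Lemma additive_map0 : g 0 = 0.
Proof. by apply: (addrI (g 0)); rewrite -gD !addr0. Qed.

Lemma additive_mapN x : g (- x) = - g x.
Proof. by apply: (addrI (g x)); rewrite -gD !subrr additive_map0. Qed.

End AdditiveMaps.

Section LinearMaps.
Variables (K : fieldType) (U W : vectType K) (f : U -> W).
Hypothesis f_lin : lin f.

Lemma linD x y : f (x + y) = f x + f y.
Proof. by have := f_lin 1 x y; rewrite !scale1r. Qed.
Lemma lin0 : f 0 = 0. Proof. exact: additive_map0 linD. Qed.
Lemma linN x : f (- x) = - f x. Proof. exact: additive_mapN linD x. Qed.
Lemma linZ a x : f (a *: x) = a *: f x.
Proof. by have := f_lin a x 0; rewrite !addr0 lin0 addr0. Qed.

End LinearMaps.

Section SumOfAbelianSubalgebras.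
Variables (T : zmodType) (b : T -> T -> T) (P Q : T -> Prop).
Hypotheses (bDl : forall x y z, b (x + y) z = b x z + b y z)
  (bDr : forall x y z, b x (y + z) = b x y + b x z)
  (bC : forall x y, b x y = - b y x)
  (bJ : forall x y z, b x (b y z) = b (b x y) z + b y (b x z))
  (P_abelian : forall a a', P a -> P a' -> b a a' = 0)
  (Q_abelian : forall c c', Q c -> Q c' -> b c c' = 0)
  (PQ_spanning : forall w, exists a c, [/\ P a, Q c & w = a + c]).

Let b0r x : b x 0 = 0. Proof. exact: additive_map0 (bDr x). Qed.
Let bNr x y : b x (- y) = - b x y. Proof. exact: additive_mapN (bDr x) y. Qed.
Let bNl x y : b (- x) y = - b x y.
Proof. exact: additive_mapN (fun x x' => bDl x x' y) x. Qed.

Lemma bracket_mixed_commute a c a' c' : P a -> Q c -> P a' -> Q c' ->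
  b (b a c) (b a' c') = 0.
Proof.
move=> Pa Qc Pa' Qc'.
have [p [q [Pp Qq ca'E]]] := PQ_spanning (b c a').
have [p' [q' [Pp' Qq' ac'E]]] := PQ_spanning (b a c').
have E1 : b (b a c) a' = b a q.
  have := bJ a c a'; rewrite (P_abelian Pa Pa') b0r addr0 => <-.
  by rewrite ca'E bDr (P_abelian Pa Pp) add0r.
have E2 : b (b a c) c' = b p' c.
  have := bJ a c c'; rewrite (Q_abelian Qc Qc') b0r => /esym/eqP.
  rewrite addr_eq0 => /eqP ->.
  by rewrite -bC ac'E bDl (Q_abelian Qq' Qc) addr0.
have E3 : b (b a q) c' = b p' q.
  have := bJ a q c'; rewrite (Q_abelian Qq Qc') b0r => /esym/eqP.
  rewrite addr_eq0 => /eqP ->.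
  by rewrite -bC ac'E bDl (Q_abelian Qq' Qq) addr0.
have E4 : b a' (b p' c) = - b p' q.
  by rewrite bJ (P_abelian Pa' Pp') (bC 0) b0r oppr0 add0r (bC a') ca'E bNr bDr
    (P_abelian Pp' Pp) add0r.
by rewrite bJ E1 E2 E3 E4 subrr.
Qed.

Lemma bracket_split x y : exists a c a' c',
  [/\ P a, Q c, P a', Q c' & b x y = b a c - b a' c'].
Proof.
have [a [c [Pa Qc ->]]] := PQ_spanning x.
have [a' [c' [Pa' Qc' ->]]] := PQ_spanning y.
exists a, c', a', c; split => //.
by rewrite !bDl !bDr (P_abelian Pa Pa') (Q_abelian Qc Qc') add0r addr0 (bC c).
Qed.

Lemma sum_of_abelian_metabelian x y u v : b (b x y) (b u v) = 0.
Proof.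
have [a1 [c1 [a2 [c2 [Pa1 Qc1 Pa2 Qc2 ->]]]]] := bracket_split x y.
have [a3 [c3 [a4 [c4 [Pa3 Qc3 Pa4 Qc4 ->]]]]] := bracket_split u v.
rewrite !(bDl, bDr, bNl, bNr) !bracket_mixed_commute //.
by rewrite !(oppr0, addr0).
Qed.

End SumOfAbelianSubalgebras.

Section Subspaces.
Variables (K : fieldType) (W : vectType K).

Lemma vspace_of_pred (P : W -> Prop) :
  P 0 -> (forall a x y, P x -> P y -> P (a *: x + y)) ->
  exists U : {vspace W}, forall x, x \in U <-> P x.
Proof.
move=> P0 Pc.
have grow (U0 : {vspace W}) : (forall x, x \in U0 -> P x) ->
    (forall x, x \in U0 <-> P x) \/
    exists2 U1 : {vspace W}, (forall x, x \in U1 -> P x) & (\dim U0 < \dim U1)%N.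
  move=> PU0; have [U0P|] := classic (forall x, P x -> x \in U0).
    by left=> x; split; [apply: PU0 | apply: U0P].
  move=> /not_all_ex_not [x /(imply_to_and (P x)) [Px x_notin]]; right.
  exists (U0 + <[x]>)%VS.
    move=> y /memv_addP [u Uu [v /vlineP [k ->] ->]].
    by rewrite addrC; apply: Pc => //; apply: PU0.
  rewrite (ltn_leqif (dimv_leqif_sup (addvSl U0 <[x]>))).
  apply: contra_notN x_notin => /subvP; apply.
  exact: subvP (addvSr U0 _) _ (memv_line x).
suff: forall n (U0 : {vspace W}), (\dim {:W} - \dim U0 <= n)%N ->
    (forall x, x \in U0 -> P x) -> exists U : {vspace W}, forall x, x \in U <-> P x.
  by move/(_ _ 0%VS); apply=> [|x]; [exact: leq_subr | rewrite memv0 => /eqP ->].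
elim=> [|n IHn] U0 codim PU0; have [U0P|[U1 PU1 dimU01]] := grow U0 PU0.
- by exists U0.
- by have := dimvS (subvf U1); lia.
- by exists U0.
- by apply: (IHn U1) => //; have := dimvS (subvf U1); lia.
Qed.

Lemma span_of_pred (S : W -> Prop) : exists U : {vspace W},
  (forall x, S x -> x \in U) /\
  forall P : W -> Prop, P 0 -> (forall a x y, P x -> P y -> P (a *: x + y)) ->
    (forall x, S x -> P x) -> forall x, x \in U -> P x.
Proof.
have [U memU] := vspace_of_pred
  (P := fun x => forall U : {vspace W}, (forall y, S y -> y \in U) -> x \in U)
  (fun U _ => mem0v U) (fun a x y Px Py U SU => memvD (memvZ a (Px U SU)) (Py U SU)).
exists U; split=> [x Sx|P P0 Pc SP x]; first by apply/memU => U' SU'; apply: SU'.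
have [UP memUP] := vspace_of_pred P0 Pc.
by move/memU => /(_ UP) Ux; apply/memUP/Ux => y /SP /memUP.
Qed.

(* The quotient map W -> W / U, with W / U realised as the complement U^C. *)
Definition quot_proj (U : {vspace W}) (x : W) : subvs_of U^C :=
  vsproj U^C (x - projv U x).

Variable U : {vspace W}.

Lemma quot_proj_lin : lin (quot_proj U).
Proof.
move=> a x y; rewrite /quot_proj -linearP; congr (vsproj _ _).
by rewrite linearP /= scalerBr addrACA opprD.
Qed.

Lemma quot_proj_sub x : x - vsval (quot_proj U x) \in U.
Proof. by rewrite vsprojK ?memv_projC // opprB addrC subrK memv_proj. Qed.

Lemma quot_proj_eq x y : x - vsval y \in U -> quot_proj U x = y.
Proof.
move=> Uxy; apply/subvs_inj/eqP; rewrite -subr_eq0 -memv0 -(capv_compl U).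
rewrite memv_cap [X in _ && X]memvB ?subvsP // andbT.
have -> : vsval (quot_proj U x) - vsval y = (x - vsval y) - (x - vsval (quot_proj U x)).
  by rewrite [in RHS]opprB [in RHS]addrC [in RHS]addrA subrK.
by rewrite memvB ?quot_proj_sub.
Qed.

Lemma quot_proj_vsval y : quot_proj U (vsval y) = y.
Proof. by apply: quot_proj_eq; rewrite subrr mem0v. Qed.

Lemma quot_proj_eq0 x : quot_proj U x = 0 <-> x \in U.
Proof.
split=> [q0|Ux]; last by apply: quot_proj_eq; rewrite raddf0 addr0.
by have := quot_proj_sub x; rewrite q0 raddf0 addr0.
Qed.

End Subspaces.

Section ZeroStructures.
Variable K : fieldType.

Lemma lin_zero (U W : vectType K) : lin (fun _ : U => 0 : W).
Proof. by move=> a x y; rewrite scaler0 addr0. Qed.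

Lemma zero_Lie_bracket (U : vectType K) : is_Lie_bracket (fun _ _ : U => 0).
Proof. by split=> [x|y|//|x y z]; [exact: lin_zero | exact: lin_zero | rewrite !addr0]. Qed.

Lemma zero_comm_assoc_alg (U : vectType K) : comm_assoc_alg (fun _ _ : U => 0).
Proof. by split=> // [a|b]; exact: lin_zero. Qed.

End ZeroStructures.

Section LieAlgebra.
Variables (K : fieldType) (V : vectType K) (br : V -> V -> V) (J : V -> V).
Hypotheses (HL : is_Lie_bracket br) (HJ : abelian_cs br J).

Lemma brDr x y z : br x (y + z) = br x y + br x z.
Proof. by case: HL => br_lin _ _ _; apply: linD. Qed.
Lemma brDl x y z : br (x + y) z = br x z + br y z.
Proof. by case: HL => _ br_lin _ _; apply: (linD (br_lin z)). Qed.
Lemma brZr a x y : br x (a *: y) = a *: br x y.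
Proof. by case: HL => br_lin _ _ _; apply: linZ. Qed.
Lemma brZl a x y : br (a *: x) y = a *: br x y.
Proof. by case: HL => _ br_lin _ _; apply: (linZ (br_lin y)). Qed.
Lemma br0r x : br x 0 = 0. Proof. exact: additive_map0 (brDr x). Qed.
Lemma br0l x : br 0 x = 0. Proof. exact: additive_map0 (fun y y' => brDl y y' x). Qed.
Lemma brNr x y : br x (- y) = - br x y. Proof. exact: additive_mapN (brDr x) y. Qed.
Lemma brNl x y : br (- x) y = - br x y.
Proof. exact: additive_mapN (fun z z' => brDl z z' y) x. Qed.
Lemma brBr x y z : br x (y - z) = br x y - br x z. Proof. by rewrite brDr brNr. Qed.
Lemma brBl x y z : br (x - y) z = br x z - br y z. Proof. by rewrite brDl brNl. Qed.
Lemma brxx x : br x x = 0. Proof. by case: HL. Qed.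

Lemma brC x y : br x y = - br y x.
Proof.
have := brxx (x + y); rewrite brDl !brDr !brxx add0r addr0 => /eqP.
by rewrite addr_eq0 => /eqP.
Qed.

Lemma brJac x y z : br x (br y z) = br (br x y) z + br y (br x z).
Proof.
case: HL => _ _ _ /(_ x y z) /eqP; rewrite -addrA addr_eq0 => /eqP ->.
by rewrite (brC (br x y) z) (brC x z) brNr opprD addrC.
Qed.

Lemma JD x y : J (x + y) = J x + J y. Proof. by case: HJ => J_lin _ _; apply: linD. Qed.
Lemma JZ a x : J (a *: x) = a *: J x. Proof. by case: HJ => J_lin _ _; apply: linZ. Qed.
Lemma J0 : J 0 = 0. Proof. exact: additive_map0 JD. Qed.
Lemma JN x : J (- x) = - J x. Proof. exact: additive_mapN JD x. Qed.
Lemma JB x y : J (x - y) = J x - J y. Proof. by rewrite JD JN. Qed.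
Lemma JJ x : J (J x) = - x. Proof. by case: HJ. Qed.
Lemma brJJ x y : br (J x) (J y) = br x y. Proof. by case: HJ. Qed.
Lemma brJl x y : br (J x) y = - br x (J y). Proof. by rewrite -brJJ JJ brNl. Qed.

(* A pair (x, y) stands for x + i y in the complexification of V. *)
Definition cx_br (X Y : V * V) : V * V :=
  (br X.1 Y.1 - br X.2 Y.2, br X.1 Y.2 + br X.2 Y.1).

Lemma cx_brDl X Y Z : cx_br (X + Y) Z = cx_br X Z + cx_br Y Z.
Proof.
case: X Y Z => [x1 x2] [y1 y2] [z1 z2]; rewrite /cx_br /= !brDl.
by congr pair; rewrite ?opprD addrACA.
Qed.

Lemma cx_brDr X Y Z : cx_br X (Y + Z) = cx_br X Y + cx_br X Z.
Proof.
case: X Y Z => [x1 x2] [y1 y2] [z1 z2]; rewrite /cx_br /= !brDr.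
by congr pair; rewrite ?opprD addrACA.
Qed.

Lemma cx_brC X Y : cx_br X Y = - cx_br Y X.
Proof.
case: X Y => [x1 x2] [y1 y2]; rewrite /cx_br /=.
congr pair => /=.
  by rewrite (brC y1) (brC y2) opprB opprK addrC.
by rewrite (brC y1) (brC y2) opprD !opprK addrC.
Qed.

Lemma cx_brJac X Y Z :
  cx_br X (cx_br Y Z) = cx_br (cx_br X Y) Z + cx_br Y (cx_br X Z).
Proof.
case: X Y Z => [x1 x2] [y1 y2] [z1 z2]; rewrite /cx_br /=.
rewrite !(brBr, brDr, brBl, brDl, brNr, brNl).
rewrite (brJac x1 y1 z1) (brJac x1 y2 z2) (brJac x2 y1 z2) (brJac x2 y2 z1).
rewrite (brJac x1 y1 z2) (brJac x1 y2 z1) (brJac x2 y1 z1) (brJac x2 y2 z2).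
congr pair.
- set a1 := br (br x1 y1) z1; set b1 := br y1 (br x1 z1).
  set a2 := br (br x1 y2) z2; set b2 := br y2 (br x1 z2).
  set a3 := br (br x2 y1) z2; set b3 := br y1 (br x2 z2).
  set a4 := br (br x2 y2) z1; set b4 := br y2 (br x2 z1).
  rewrite (addrACA a3) (opprD a2) (opprD (a3 + a4)) (addrACA a1).
  rewrite (addrACA (a1 - a2)); congr (_ + _); rewrite -!addrA; congr (_ + _);
    rewrite -!opprD; congr (- _); last by rewrite addrCA.
  by rewrite addrA [RHS]addrC.
- set a1 := br (br x1 y1) z2; set b1 := br y1 (br x1 z2).
  set a2 := br (br x1 y2) z1; set b2 := br y2 (br x1 z1).
  set a3 := br (br x2 y1) z1; set b3 := br y1 (br x2 z1).
  set a4 := br (br x2 y2) z2; set b4 := br y2 (br x2 z2).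
  rewrite (addrACA a1) (opprD a4) (addrACA a3) (addrACA (a1 + a2)).
  congr (_ + _); rewrite -!addrA; congr (_ + _); last by rewrite addrCA.
  by rewrite addrA addrC.
Qed.

(* The (1,0)- and (0,1)-vectors, i.e. the i- and (-i)-eigenvectors of J. *)
Definition type10 (X : V * V) := X.2 = - J X.1.
Definition type01 (X : V * V) := X.2 = J X.1.

Lemma type10_abelian X Y : type10 X -> type10 Y -> cx_br X Y = 0.
Proof.
case: X Y => [x1 x2] [y1 y2]; rewrite /type10 /cx_br /= => -> ->.
by rewrite !(brNl, brNr) opprK brJJ subrr brJl opprK addrC subrr.
Qed.

Lemma type01_abelian X Y : type01 X -> type01 Y -> cx_br X Y = 0.
Proof.
case: X Y => [x1 x2] [y1 y2]; rewrite /type01 /cx_br /= => -> ->.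
by rewrite brJJ subrr brJl subrr.
Qed.

Lemma type10_type01_spanning (two_neq0 : (2 : K) != 0) X :
  exists Y W, [/\ type10 Y, type01 W & X = Y + W].
Proof.
have half_add_half (p : V) : 2^-1 *: p + 2^-1 *: p = p.
  have halves : 2^-1 + 2^-1 = 1 :> K.
    by rewrite -[RHS](mulVf two_neq0) [X in _ * X]mulr2n mulrDr mulr1.
  by rewrite -scalerDl halves scale1r.
case: X => p q; set hp := 2^-1 *: p; set hq := 2^-1 *: q.
exists (hp + J hq, hq - J hp), (hp - J hq, hq + J hp); split; rewrite /type10 /type01 /=.
- by rewrite JD JJ opprD opprK addrC.
- by rewrite JB JJ opprK addrC.
by congr pair; rewrite addrACA ?subrr ?addNr addr0 half_add_half.
Qed.

Lemma abelian_cs_metabelian (two_neq0 : (2 : K) != 0) x y u v :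
  br (br x y) (br u v) = 0.
Proof.
have cx_br_real a b : cx_br (a, 0) (b, 0) = (br a b, 0).
  by rewrite /cx_br /= !br0l !br0r subr0 add0r.
have := sum_of_abelian_metabelian cx_brDl cx_brDr cx_brC cx_brJac
  type10_abelian type01_abelian (type10_type01_spanning two_neq0) (x, 0) (y, 0) (u, 0) (v, 0).
by rewrite !cx_br_real => /(congr1 fst).
Qed.

Lemma exists_abelian_derived_subspace (two_neq0 : (2 : K) != 0) :
  exists D : {vspace V},
    (forall x y, br x y \in D) /\ (forall u v, u \in D -> v \in D -> br u v = 0).
Proof.
have [D [brD D_ind]] := span_of_pred (fun z => exists x y, z = br x y).
exists D; split=> [x y|u v Du]; first by apply: brD; exists x, y.
move: u Du v; apply: (D_ind (fun u => forall v, v \in D -> br u v = 0)).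
- by move=> v _; exact: br0l.
- by move=> a u1 u2 IH1 IH2 v Dv; rewrite brDl brZl IH1 ?IH2 // scaler0 addr0.
move=> _ [x [y ->]]; apply: (D_ind (fun v => br (br x y) v = 0)).
- exact: br0r.
- by move=> a v1 v2 IH1 IH2; rewrite brDr brZr IH1 IH2 scaler0 addr0.
by move=> _ [u [v ->]]; exact: abelian_cs_metabelian.
Qed.

Section Subalgebra.
Variable U : {vspace V}.
Hypotheses (brU : forall x y, x \in U -> y \in U -> br x y \in U)
  (JU : forall x, x \in U -> J x \in U).

Definition sub_br (u v : subvs_of U) : subvs_of U := vsproj U (br (vsval u) (vsval v)).
Definition sub_J (u : subvs_of U) : subvs_of U := vsproj U (J (vsval u)).

Lemma sub_brE u v : vsval (sub_br u v) = br (vsval u) (vsval v).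
Proof. by rewrite vsprojK // brU ?subvsP. Qed.

Lemma sub_JE u : vsval (sub_J u) = J (vsval u).
Proof. by rewrite vsprojK // JU ?subvsP. Qed.

Lemma sub_Lie_bracket : is_Lie_bracket sub_br.
Proof.
split=> [u a v w|v a u w|u|u v w]; apply: subvs_inj; rewrite ?linearP /= !sub_brE.
- by rewrite linearP /= brDr brZr.
- by rewrite linearP /= brDl brZl.
- exact: brxx.
by case: HL.
Qed.

Lemma sub_abelian_cs : abelian_cs sub_br sub_J.
Proof.
split=> [a u v|u|u v]; apply: subvs_inj; rewrite ?linearP /= ?(sub_brE, sub_JE).
- by rewrite linearP /= JD JZ.
- exact: JJ.
- exact: brJJ.
Qed.

Lemma subalgebra_holo_iso : quotient_holo_iso br J 0 U sub_br sub_J.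
Proof.
exists (vsproj U); split.
- by move=> a x y; rewrite linearP.
- by move=> u; exists (vsval u); [exact: subvsP | exact: vsvalK].
- move=> x Ux; rewrite memv0; split=> [/(congr1 vsval)|/eqP ->]; last exact: linear0.
  by rewrite vsprojK // raddf0 => ->.
- by move=> x y Ux Uy; apply: subvs_inj; rewrite sub_brE !vsprojK ?brU.
- by move=> x Ux; apply: subvs_inj; rewrite sub_JE !vsprojK ?JU.
Qed.

End Subalgebra.

Definition aff_quotient (Ilo Ihi : {vspace V}) : Prop :=
  exists (A : vectType K) (m : A -> A -> A), comm_assoc_alg m /\
    exists (h : vectType K) (brh : h -> h -> h) (Jh : h -> h),
      central_ext_of_aff brh Jh m /\ quotient_holo_iso br J Ilo Ihi brh Jh.

Section AbelianQuotient.
Variable I : {vspace V}.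
Hypotheses (brI : forall x y, br x y \in I) (JI : forall x, x \in I -> J x \in I).

Definition quot_J (u : subvs_of I^C) : subvs_of I^C := quot_proj I (J (vsval u)).

Lemma quot_projJ x : quot_proj I (J x) = quot_J (quot_proj I x).
Proof.
apply: quot_proj_eq; set y := quot_proj I x.
have -> : J x - vsval (quot_J y) = J (x - vsval y) + (J (vsval y) - vsval (quot_J y)).
  by rewrite JB addrA subrK.
by rewrite memvD ?JI ?quot_proj_sub.
Qed.

Lemma quot_abelian_cs : abelian_cs (fun _ _ => 0) quot_J.
Proof.
split=> // [a u v|u].
  by rewrite /quot_J linearP /= JD JZ quot_proj_lin.
rewrite -[quot_J u]/(quot_proj I (J (vsval u))) -quot_projJ JJ.
by rewrite (linN (@quot_proj_lin _ _ I)) quot_proj_vsval.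
Qed.

Lemma abelian_quotient_aff : aff_quotient I fullv.
Proof.
exists 'rV[K]_0, (fun _ _ => 0); split; first exact: zero_comm_assoc_alg.
exists (subvs_of I^C), (fun _ _ => 0), quot_J; split.
  split=> //; [exact: zero_Lie_bracket | exact: quot_abelian_cs |].
  exists (fun _ => 0); split=> //; first exact: lin_zero.
  - by case=> a b; exists 0; rewrite (thinmx0 a) (thinmx0 b).
  - by move=> x y; rewrite /aff_bracket /= subrr.
  - by move=> x; rewrite /aff_J /= oppr0.
exists (quot_proj I); split.
- exact: quot_proj_lin.
- by move=> y; exists (vsval y); [exact: memvf | exact: quot_proj_vsval].
- by move=> x _; exact: quot_proj_eq0.
- by move=> x y _ _; apply/quot_proj_eq0.
- by move=> x _; exact: quot_projJ.
Qed.

End AbelianQuotient.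

Lemma exists_J_preimage (D : {vspace V}) :
  exists DJ : {vspace V}, forall x, x \in DJ <-> J x \in D.
Proof.
apply: vspace_of_pred => [|a x y Dx Dy]; first by rewrite J0 mem0v.
by rewrite JD JZ memvD ?memvZ.
Qed.

Lemma exists_center (N : {vspace V}) : exists Z : {vspace V},
  forall x, x \in Z <-> x \in N /\ forall y, y \in N -> br x y = 0.
Proof.
apply: vspace_of_pred => [|a x y [Nx x_central] [Ny y_central]].
  by split=> [|y _]; [exact: mem0v | exact: br0l].
split=> [|z Nz]; first by rewrite memvD ?memvZ.
by rewrite brDl brZl x_central ?y_central // scaler0 addr0.
Qed.

Section DerivedIdeal.
Variables (D DJ Z : {vspace V}).
Hypotheses (brD : forall x y, br x y \in D)
  (D_abelian : forall u v, u \in D -> v \in D -> br u v = 0)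
  (memDJ : forall x, x \in DJ <-> J x \in D).
Let N := (D + DJ)%VS.
Hypothesis memZ : forall x, x \in Z <-> x \in N /\ forall y, y \in N -> br x y = 0.
Let C := (D :\: Z)%VS.

Lemma memN_D a : a \in D -> a \in N.
Proof. exact: subvP (addvSl D DJ) a. Qed.

Lemma memN_JD a : a \in D -> J a \in N.
Proof. by move=> Da; apply: subvP (addvSr D DJ) _ _; apply/memDJ; rewrite JJ memvN. Qed.

Lemma memNP x : x \in N -> exists a a', [/\ a \in D, a' \in D & x = a + J a'].
Proof.
case/memv_addP=> a Da [b DJb ->]; exists a, (- J b); split=> //.
  by rewrite memvN; apply/memDJ.
by rewrite JN JJ opprK.
Qed.

Lemma brN x y : br x y \in N.
Proof. exact: memN_D. Qed.

Lemma memNJ x : x \in N -> J x \in N.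
Proof.
case/memNP=> a [a' [Da Da' ->]]; rewrite JD JJ.
by rewrite memvD ?memvN ?memN_JD ?memN_D.
Qed.

Lemma memZ_N z : z \in Z -> z \in N.
Proof. by case/memZ. Qed.

Lemma br_centerl z y : z \in Z -> y \in N -> br z y = 0.
Proof. by case/memZ=> _; apply. Qed.

Lemma br_centerr z y : z \in Z -> y \in N -> br y z = 0.
Proof. by move=> Zz Ny; rewrite brC br_centerl ?oppr0. Qed.

Lemma memZJ z : z \in Z -> J z \in Z.
Proof.
move=> Zz; apply/memZ; split; first by rewrite memNJ ?memZ_N.
by move=> y Ny; rewrite brJl br_centerl ?memNJ ?oppr0.
Qed.

Lemma memC_D c : c \in C -> c \in D.
Proof. exact: subvP (diffvSl D Z) c. Qed.

Lemma memC_Z c : c \in C -> c \in Z -> c = 0.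
Proof.
move=> Cc Zc; apply/eqP; rewrite -memv0 -(capv_diff D Z) memv_cap.
by apply/andP.
Qed.

Lemma C_JC_independent c c' : c \in C -> c' \in C -> c + J c' \in Z ->
  c = 0 /\ c' = 0.
Proof.
move=> Cc Cc' Zcc'.
have Zc : c \in Z.
  apply/memZ; split; first by rewrite memN_D ?memC_D.
  move=> y /memNP [a [a' [Da Da' ->]]]; rewrite brDr (D_abelian (memC_D Cc) Da) add0r.
  have := br_centerl Zcc' (memN_JD Da').
  by rewrite brDl brJJ (D_abelian (memC_D Cc') Da') addr0.
have c0 := memC_Z Cc Zc; split=> //.
by move: Zcc'; rewrite c0 add0r => /memZJ; rewrite JJ memvN; exact: memC_Z.
Qed.

Definition represents x c c' := x - (c + J c') \in Z.

Lemma represents_uniq x c1 c1' c2 c2' :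
  c1 \in C -> c1' \in C -> c2 \in C -> c2' \in C ->
  represents x c1 c1' -> represents x c2 c2' -> c1 = c2 /\ c1' = c2'.
Proof.
move=> Cc1 Cc1' Cc2 Cc2' rep1 rep2.
have : (c1 - c2) + J (c1' - c2') \in Z.
  have -> : (c1 - c2) + J (c1' - c2') = (x - (c2 + J c2')) - (x - (c1 + J c1')).
    by rewrite [in RHS]addrC opprB addrA subrK JB opprD addrACA.
  exact: memvB.
by case/C_JC_independent; rewrite ?memvB // => /subr0_eq -> /subr0_eq ->.
Qed.

Lemma represents_D a : a \in D -> exists2 c, c \in C & a - c \in Z.
Proof.
move=> Da; have : a \in (C + (D :&: Z))%VS by rewrite /C addv_diff_cap.
case/memv_addP=> c Cc [z /memv_capP [_ Zz] ->]; exists c => //.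
by rewrite addrC addKr.
Qed.

Lemma represents_exists x : x \in N ->
  exists c c', [/\ c \in C, c' \in C & represents x c c'].
Proof.
case/memNP=> a [a' [Da Da' ->]].
have [c Cc Zac] := represents_D Da; have [c' Cc' Zac'] := represents_D Da'.
exists c, c'; split=> //; rewrite /represents.
have -> : a + J a' - (c + J c') = (a - c) + J (a' - c') by rewrite JB opprD addrACA.
by rewrite memvD ?memZJ.
Qed.

(* The pair (c', c) with x = c + J c' mod Z; this ordering turns J into aff_J. *)
Definition coordN (x : V) : subvs_of C * subvs_of C :=
  epsilon (inhabits 0) (fun p => represents x (vsval p.2) (vsval p.1)).

Lemma coordN_spec x : x \in N -> represents x (vsval (coordN x).2) (vsval (coordN x).1).
Proof.
move=> Nx; apply: (epsilon_spec (inhabits 0) (fun p => represents x (vsval p.2) (vsval p.1))).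
have [c [c' [Cc Cc' rep]]] := represents_exists Nx.
by exists (vsproj C c', vsproj C c); rewrite /= !vsprojK.
Qed.

Lemma coordN_eq x (c c' : subvs_of C) : x \in N ->
  represents x (vsval c) (vsval c') -> coordN x = (c', c).
Proof.
move=> Nx rep; have := coordN_spec Nx; case: (coordN x) => [p1 p2] /= rep'.
have [e1 e2] := represents_uniq (subvsP c) (subvsP c') (subvsP p2) (subvsP p1) rep rep'.
by rewrite (subvs_inj e1) (subvs_inj e2).
Qed.

Lemma coordN_lin a x y : x \in N -> y \in N ->
  coordN (a *: x + y) = a *: coordN x + coordN y.
Proof.
move=> Nx Ny; set p := coordN x; set q := coordN y.
rewrite (coordN_eq (c := a *: p.2 + q.2) (c' := a *: p.1 + q.1)) ?memvD ?memvZ //.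
rewrite /represents !linearP /= JD JZ (addrACA (a *: vsval p.2)) opprD addrACA.
by rewrite -scalerDr -scalerBr memvD ?memvZ //; exact: coordN_spec.
Qed.

Lemma coordNB x y : x \in N -> y \in N -> coordN (x - y) = coordN x - coordN y.
Proof.
move=> Nx Ny; have -> : x - y = (-1) *: y + x by rewrite scaleN1r addrC.
by rewrite coordN_lin // scaleN1r addrC.
Qed.

Lemma coordN_eq0 x : x \in N -> coordN x = 0 <-> x \in Z.
Proof.
move=> Nx; split=> [cx0|Zx].
  by have := coordN_spec Nx; rewrite cx0 /represents /= J0 addr0 subr0.
apply: (coordN_eq (c := 0) (c' := 0)) => //.
by rewrite /represents /= J0 addr0 subr0.
Qed.

Lemma coordN_D a : a \in D -> (coordN a).1 = 0 /\ a - vsval (coordN a).2 \in Z.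
Proof.
move=> Da; have [c Cc Zac] := represents_D Da.
rewrite (coordN_eq (c := vsproj C c) (c' := 0)) ?memN_D //= vsprojK //.
by rewrite /represents J0 addr0.
Qed.

Lemma br_represented x y c1 c1' c2 c2' :
  c1 \in D -> c1' \in D -> c2 \in D -> c2' \in D ->
  represents x c1 c1' -> represents y c2 c2' ->
  br x y = br (J c1') c2 - br (J c2') c1.
Proof.
move=> Dc1 Dc1' Dc2 Dc2' rep1 rep2.
have Nv1 : c1 + J c1' \in N by apply: memvD; [apply: memN_D | apply: memN_JD].
have Nv2 : c2 + J c2' \in N by apply: memvD; [apply: memN_D | apply: memN_JD].
rewrite -[x](subrK (c1 + J c1')) -[y](subrK (c2 + J c2')).
rewrite brDl (br_centerl rep1 (memvD (memZ_N rep2) Nv2)) add0r.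
rewrite brDr (br_centerr rep2 Nv1) add0r.
rewrite !brDl !brDr (D_abelian Dc1 Dc2) brJJ (D_abelian Dc1' Dc2') add0r addr0.
by rewrite (brC c1) addrC.
Qed.

Definition mulC (a b : subvs_of C) : subvs_of C :=
  (coordN (br (J (vsval a)) (vsval b))).2.

Lemma coordN_brJ (a b : subvs_of C) : coordN (br (J (vsval a)) (vsval b)) = (0, mulC a b).
Proof. by rewrite [LHS]surjective_pairing (coordN_D (brD _ _)).1. Qed.

Lemma br_J_mulC (a b c : subvs_of C) :
  br (J (vsval a)) (vsval (mulC b c)) = br (J (vsval a)) (br (J (vsval b)) (vsval c)).
Proof.
have Z_bc := (coordN_D (brD (J (vsval b)) (vsval c))).2.
have := br_centerr Z_bc (memN_JD (memC_D (subvsP a))).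
by rewrite brBr => /subr0_eq ->.
Qed.

Lemma mulC_comm (a b : subvs_of C) : mulC a b = mulC b a.
Proof. by rewrite /mulC brJl -brC. Qed.

Lemma mulC_left_comm (a b c : subvs_of C) : mulC a (mulC b c) = mulC b (mulC a c).
Proof.
rewrite /mulC -/(mulC b c) -/(mulC a c) !br_J_mulC brJac brJJ.
by rewrite (D_abelian (memC_D (subvsP a)) (memC_D (subvsP b))) br0l add0r.
Qed.

Lemma mulC_comm_assoc : comm_assoc_alg mulC.
Proof.
split=> [a k x y|b k x y|a b|a b c].
- by rewrite /mulC linearP /= brDr brZr coordN_lin ?brN.
- by rewrite /mulC linearP /= JD JZ brDl brZl coordN_lin ?brN.
- exact: mulC_comm.
- by rewrite [RHS]mulC_comm [RHS]mulC_left_comm (mulC_comm c b).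
Qed.

Lemma coordN_br x y : x \in N -> y \in N ->
  coordN (br x y) = aff_bracket mulC (coordN x) (coordN y).
Proof.
move=> Nx Ny; set p := coordN x; set q := coordN y.
have Dp (i : subvs_of C) : vsval i \in D by apply/memC_D/subvsP.
rewrite (br_represented (Dp p.2) (Dp p.1) (Dp q.2) (Dp q.1)) ?coordN_spec //.
rewrite coordNB ?brN // !coordN_brJ.
by rewrite /aff_bracket; congr pair; rewrite /= subrr.
Qed.

Lemma coordN_J x : x \in N -> coordN (J x) = aff_J (coordN x).
Proof.
move=> Nx; set p := coordN x.
rewrite /aff_J (coordN_eq (c := - p.1) (c' := p.2)) ?memNJ // /represents raddfN /=.
have -> : J x - (- vsval p.1 + J (vsval p.2)) = J (x - (vsval p.2 + J (vsval p.1))).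
  by rewrite JB JD JJ [- _ + _]addrC.
exact/memZJ/coordN_spec.
Qed.

Let brN2 x y (_ : x \in N) (_ : y \in N) : br x y \in N := brN x y.

Lemma sub_br_N_center (u : subvs_of N) :
  in_center (sub_br (U:=N)) u <-> vsval u \in Z.
Proof.
split=> [u_central|Zu v]; last first.
  by apply: subvs_inj; rewrite (sub_brE brN2) (br_centerl Zu (subvsP v)) raddf0.
apply/memZ; split=> [|y Ny]; first exact: subvsP.
have := congr1 vsval (u_central (vsproj N y)).
by rewrite (sub_brE brN2) vsprojK // raddf0.
Qed.

Lemma derived_ideal_central_ext : central_ext_of_aff (sub_br (U:=N)) (sub_J (U:=N)) mulC.
Proof.
have Nc (c c' : subvs_of C) : vsval c + J (vsval c') \in N.
  by apply: memvD; [apply: memN_D | apply: memN_JD]; apply/memC_D/subvsP.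
split; [exact: sub_Lie_bracket | exact: sub_abelian_cs memNJ | |].
  by move=> u /sub_br_N_center Zu; apply/sub_br_N_center; rewrite (sub_JE memNJ) memZJ.
exists (fun u => coordN (vsval u)); split.
- by move=> a u v; rewrite linearP coordN_lin ?subvsP.
- case=> c' c; exists (vsproj N (vsval c + J (vsval c'))).
  by rewrite vsprojK // (coordN_eq (c := c) (c' := c')) // /represents subrr mem0v.
- by move=> u; rewrite coordN_eq0 ?subvsP // sub_br_N_center.
- by move=> u v; rewrite (sub_brE brN2) coordN_br ?subvsP.
- by move=> u; rewrite (sub_JE memNJ) coordN_J ?subvsP.
Qed.

Lemma derived_ideal_aff : aff_quotient 0 N.
Proof.
exists (subvs_of C), mulC; split; first exact: mulC_comm_assoc.
exists (subvs_of N), (sub_br (U:=N)), (sub_J (U:=N)); split.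
  exact: derived_ideal_central_ext.
exact: subalgebra_holo_iso memNJ.
Qed.

End DerivedIdeal.

End LieAlgebra.

Unset Implicit Arguments.

Theorem mainTheorem1 (R : realType) (V : vectType R) (br : V -> V -> V) (J : V -> V) :
  is_Lie_bracket br -> abelian_cs br J ->
  exists (r : nat) (s : nat -> {vspace V}),
    [/\ s 0%N = 0%VS, s r = fullv,
        (forall j, (j < r)%N -> (s j <= s j.+1)%VS),
        (forall j, (j <= r)%N -> lie_ideal br (s j) /\ J_stable J (s j)) &
        (forall j, (0 < j <= r)%N ->
           exists (A : vectType R) (m : A -> A -> A),
             comm_assoc_alg m /\
             exists (h : vectType R) (brh : h -> h -> h) (Jh : h -> h),
               central_ext_of_aff brh Jh m /\
               quotient_holo_iso br J (s j.-1) (s j) brh Jh)].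
Proof.
move=> HL HJ; have two_neq0 : (2 : R) != 0 by rewrite Num.Theory.pnatr_eq0.
have [D [brD D_abelian]] := exists_abelian_derived_subspace HL HJ two_neq0.
have [DJ memDJ] := exists_J_preimage HJ D.
pose N := (D + DJ)%VS.
have [Z memZ] := exists_center HL N.
have NJ := memNJ HJ memDJ.
exists 2%N, (nth fullv [:: 0%VS; N]); split=> //.
- by case=> [|[]] //= _; rewrite ?sub0v ?subvf.
- case=> [|[|[]]] //= _.
  + by split=> [x y|x]; rewrite !memv0 => /eqP ->; rewrite ?(br0r HL) ?(J0 HJ).
  + by split=> [x y _|]; [exact: memN_D | exact: NJ].
  + by split=> [x y _|x _]; exact: memvf.
- case=> [|[|[]]] //= _.
  + exact (derived_ideal_aff HL HJ brD D_abelian memDJ memZ).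
  + by apply: (abelian_quotient_aff HJ) => // x y; exact: memN_D.
Qed.
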